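(* Let $(X,\mathcal{E})$ be a ballean and $Y\subseteq X$ an unbounded subset. If $(X,\mathcal{E})$ is maximal (respectively, extremely normal, ultranormal), then the subballean $(Y,\mathcal{E}_Y)$ is maximal (respectively, extremely normal, ultranormal).
   Context: A ballean $(X,\mathcal{E})$ is a set with a coarse structure. $E[x]=\{y:(x,y)\in E\}$, $E[A]=\bigcup_{a\in A}E[a]$. $Y$ is bounded if $Y\subseteq E[x]$ for some $x$ and $E\in\mathcal{E}$. The subballean on $Y$ has coarse structure $\mathcal{E}_Y=\{E\cap(Y\times Y):E\in\mathcal{E}\}$. $A$ is large if $X=E[A]$ for some $E$. Subsets $A,B$ are asymptotically disjoint if $E[A]\cap E[B]$ is bounded for every $E$. An unbounded ballean is maximal if $X$ is bounded in every coarse structure strictly containing $\mathcal{E}$; extremely normal if every unbounded subset is large; ultranormal if no two unbounded subsets are asymptotically disjoint. *)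

Set Implicit Arguments.

Definition rel (X : Type) := X -> X -> Prop.

(* A coarse structure on X: a family of entourages (relations on X) that
   contains the diagonal, is closed under subsets, finite unions, inverses
   and composition, and (Protasov's standing convention) is connected. *)
Record is_coarse (X : Type) (E : rel X -> Prop) : Prop := {
  cs_diag : E (fun x y => x = y);
  cs_sub : forall F G : rel X, E F -> (forall x y, G x y -> F x y) -> E G;
  cs_union : forall F G : rel X, E F -> E G -> E (fun x y => F x y \/ G x y);
  cs_inv : forall F : rel X, E F -> E (fun x y => F y x);
  cs_comp : forall F G : rel X, E F -> E G ->
              E (fun x z => exists y, F x y /\ G y z);
  cs_conn : forall x y : X, exists F, E F /\ F x y
}.

Definition image (X : Type) (F : rel X) (A : X -> Prop) : X -> Prop :=
  fun z => exists a, A a /\ F a z.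

Definition bounded (X : Type) (E : rel X -> Prop) (A : X -> Prop) : Prop :=
  exists (x : X) (F : rel X), E F /\ forall y, A y -> F x y.

Definition unbounded_ballean (X : Type) (E : rel X -> Prop) : Prop :=
  ~ bounded E (fun _ => True).

Definition large (X : Type) (E : rel X -> Prop) (A : X -> Prop) : Prop :=
  exists F, E F /\ forall x, image F A x.

Definition asymp_disjoint (X : Type) (E : rel X -> Prop) (A B : X -> Prop) : Prop :=
  forall F, E F -> bounded E (fun z => image F A z /\ image F B z).

Definition maximal (X : Type) (E : rel X -> Prop) : Prop :=
  unbounded_ballean E /\
  forall E' : rel X -> Prop, is_coarse E' ->
    (forall F, E F -> E' F) -> (exists F, E' F /\ ~ E F) ->
    bounded E' (fun _ => True).

Definition extremely_normal (X : Type) (E : rel X -> Prop) : Prop :=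
  unbounded_ballean E /\ forall A, ~ bounded E A -> large E A.

Definition ultranormal (X : Type) (E : rel X -> Prop) : Prop :=
  unbounded_ballean E /\
  forall A B, ~ bounded E A -> ~ bounded E B -> ~ asymp_disjoint E A B.

Definition subcoarse (X : Type) (E : rel X -> Prop) (Y : X -> Prop)
  : rel {x : X | Y x} -> Prop :=
  fun F => exists G, E G /\
    forall a b : {x : X | Y x}, F a b <-> G (proj1_sig a) (proj1_sig b).

From Stdlib Require Import ProofIrrelevance Classical.
Set Implicit Arguments.

(* 1. Boundedness is insensitive to the passage X <-> Y: A is bounded in the
      subballean iff its lift is bounded in X (for Y nonempty).  Hence the
      subballean on an unbounded Y is unbounded.
   2. Extreme normality: an unbounded A ⊆ Y lifts to an unbounded set, which
      is large in X, and restricting the witnessing entourage shows A large.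
   3. Ultranormality: asymptotically disjoint A, B in Y lift to
      asymptotically disjoint sets of X (using the entourage F∘F⁻¹).
   4. Maximality: a coarse structure E' on Y strictly larger than E_Y
      generates the coarse structure [extension E'] on X, made of relations
      contained in H ∪ H∘K∘H (H ∈ E, K ∈ E'); it strictly contains E, so X
      is bounded in it, and pulling a bound back shows Y bounded in E'. *)

Definition rcomp (T : Type) (F G : rel T) : rel T :=
  fun x z => exists y, F x y /\ G y z.

Section Subballean.

Variables (X : Type) (E : rel X -> Prop) (Y : X -> Prop).
Hypothesis hE : is_coarse E.

Definition lift_set (A : sig Y -> Prop) : X -> Prop :=
  fun x => exists a, A a /\ proj1_sig a = x.

Definition restrict (G : rel X) : rel (sig Y) :=
  fun a b => G (proj1_sig a) (proj1_sig b).

Definition push (K : rel (sig Y)) : rel X :=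
  fun x y => exists a b, proj1_sig a = x /\ proj1_sig b = y /\ K a b.

Lemma sig_Y_inj (a b : sig Y) : proj1_sig a = proj1_sig b -> a = b.
Proof. apply eq_sig_hprop; intros; apply proof_irrelevance. Qed.

Lemma subcoarse_restrict (G : rel X) : E G -> subcoarse E Y (restrict G).
Proof. intros HG; exists G; split; [exact HG | tauto]. Qed.

Lemma subcoarse_empty (F : rel (sig Y)) : (sig Y -> False) -> subcoarse E Y F.
Proof.
  intros Hempty; exists (fun x y => x = y); split; [apply (cs_diag hE) |].
  intros a; destruct (Hempty a).
Qed.

Lemma bounded_lift (A : sig Y -> Prop) :
  bounded (subcoarse E Y) A -> bounded E (lift_set A).
Proof.
  intros [a0 [F [[G [HG HFG]] HA]]].
  exists (proj1_sig a0), G; split; [exact HG |].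
  intros x [b [Hb <-]]; apply HFG, HA, Hb.
Qed.

(* Conversely, a bound in X centred outside Y is moved to a point y0 of Y
   by composing with an entourage joining y0 to the centre. *)
Lemma bounded_of_lift (y0 : sig Y) (A : sig Y -> Prop) :
  bounded E (lift_set A) -> bounded (subcoarse E Y) A.
Proof.
  intros [x [G [HG HA]]].
  destruct (cs_conn hE (proj1_sig y0) x) as [C [HC Cy0x]].
  exists y0, (restrict (rcomp C G)); split.
  - apply subcoarse_restrict, (cs_comp hE); assumption.
  - intros b Hb; exists x; split; [exact Cy0x |].
    apply HA; exists b; auto.
Qed.

Lemma unbounded_subballean :
  ~ bounded E Y -> unbounded_ballean (subcoarse E Y).
Proof.
  intros hY Hb; apply hY.
  destruct (bounded_lift Hb) as [x [F [HF Hx]]].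
  exists x, F; split; [exact HF |].
  intros y Hy; apply Hx; exists (exist _ y Hy); auto.
Qed.

Lemma large_of_lift (A : sig Y -> Prop) :
  large E (lift_set A) -> large (subcoarse E Y) A.
Proof.
  intros [F [HF Hcov]].
  exists (restrict F); split; [apply subcoarse_restrict, HF |].
  intros b; destruct (Hcov (proj1_sig b)) as [x [[a [Ha <-]] Hab]].
  exists a; auto.
Qed.

(* Asymptotic disjointness in Y transfers to the lifts: a point z of
   F[lift A] ∩ F[lift B], say F a z, F b z, has a in H[A] ∩ H[B] for the
   symmetric entourage H = F∘F⁻¹, so z lies near the bound of H[A] ∩ H[B]. *)
Lemma asymp_disjoint_lift (A B : sig Y -> Prop) :
  asymp_disjoint (subcoarse E Y) A B ->
  asymp_disjoint E (lift_set A) (lift_set B).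
Proof.
  intros Hdis F HF.
  set (H := fun x y => exists z, F x z /\ F y z).
  assert (HH : E H).
  { apply (cs_sub hE _ _ (cs_comp hE _ _ HF (cs_inv hE _ HF))); auto. }
  destruct (Hdis _ (subcoarse_restrict HH)) as [c0 [K [[G [HG HKG]] Hc]]].
  exists (proj1_sig c0), (rcomp G F); split; [apply (cs_comp hE); assumption |].
  intros z [[x [[a [Ha <-]] Faz]] [x' [[b [Hb <-]] Fbz]]].
  exists (proj1_sig a); split; [| exact Faz].
  apply HKG, Hc; split.
  - exists a; split; [exact Ha | exists z; auto].
  - exists b; split; [exact Hb | exists z; auto].
Qed.

Section Extension.

Variable E' : rel (sig Y) -> Prop.
Hypothesis hE' : is_coarse E'.
Hypothesis E'_ext : forall F, subcoarse E Y F -> E' F.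

Definition detour (H : rel X) (K : rel (sig Y)) : rel X :=
  fun x y => exists a b, H x (proj1_sig a) /\ K a b /\ H (proj1_sig b) y.

(* The coarse structure on X generated by E and E'. *)
Definition extension : rel X -> Prop :=
  fun G => exists H K, E H /\ E' K /\
    forall x y, G x y -> H x y \/ detour H K x y.

Lemma extension_comp (F G : rel X) :
  extension F -> extension G -> extension (rcomp F G).
Proof.
  intros [H1 [K1 [h1 [k1 c1]]]] [H2 [K2 [h2 [k2 c2]]]].
  (* Two consecutive detours are joined by an H1∘H2-step inside Y. *)
  set (M := rcomp H1 H2).
  assert (hM : E M) by (apply (cs_comp hE); assumption).
  assert (hMY : E' (restrict M)) by (apply E'_ext, subcoarse_restrict, hM).
  exists (fun x y => H1 x y \/ H2 x y \/ M x y),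
    (fun a d => K1 a d \/ K2 a d \/ rcomp K1 (rcomp (restrict M) K2) a d).
  split; [apply (cs_union hE); [| apply (cs_union hE)]; assumption |].
  split.
  { apply (cs_union hE'); [| apply (cs_union hE')]; try assumption.
    apply (cs_comp hE'); [| apply (cs_comp hE')]; assumption. }
  intros x y [w [Fxw Gwy]].
  destruct (c1 _ _ Fxw) as [p1 | [a [b [p [q r]]]]];
  destruct (c2 _ _ Gwy) as [p2 | [a' [b' [p' [q' r']]]]].
  - left; right; right; exists w; auto.
  - right; exists a', b'; split; [right; right; exists w; auto | auto].
  - right; exists a, b; split; [left; exact p |].
    split; [left; exact q | right; right; exists w; auto].
  - right; exists a, b'; split; [left; exact p |].
    split; [| right; left; exact r'].
    right; right; exists b; split; [exact q |].
    exists a'; split; [exists w; auto | exact q'].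
Qed.

Lemma extension_coarse : is_coarse extension.
Proof.
  constructor.
  - exists (fun x y => x = y), (fun a b => a = b).
    split; [apply (cs_diag hE) |]; split; [apply (cs_diag hE') |]; auto.
  - intros F G [H [K [h [k c]]]] HGF; exists H, K; auto.
  - intros F G [H1 [K1 [h1 [k1 c1]]]] [H2 [K2 [h2 [k2 c2]]]].
    exists (fun x y => H1 x y \/ H2 x y), (fun a b => K1 a b \/ K2 a b).
    split; [apply (cs_union hE); assumption |].
    split; [apply (cs_union hE'); assumption |].
    intros x y [Fxy | Gxy];
      [destruct (c1 _ _ Fxy) as [p | [a [b [p [q r]]]]]
      |destruct (c2 _ _ Gxy) as [p | [a [b [p [q r]]]]]];
      [left | right; exists a, b | left | right; exists a, b]; auto.
  - intros F [H [K [h [k c]]]].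
    exists (fun x y => H y x), (fun a b => K b a).
    split; [apply (cs_inv hE); assumption |].
    split; [apply (cs_inv hE'); assumption |].
    intros x y Fyx; destruct (c _ _ Fyx) as [p | [a [b [p [q r]]]]];
      [left | right; exists b, a]; auto.
  - exact extension_comp.
  - intros x y; destruct (cs_conn hE x y) as [H [HH Hxy]].
    exists H; split; [| exact Hxy].
    exists H, (fun a b => a = b).
    split; [exact HH |]; split; [apply (cs_diag hE') |]; auto.
Qed.

Lemma extension_contains (G : rel X) : E G -> extension G.
Proof.
  intros HG; exists G, (fun a b => a = b).
  split; [exact HG |]; split; [apply (cs_diag hE') |]; auto.
Qed.

Lemma extension_strict (F0 : rel (sig Y)) :
  E' F0 -> ~ subcoarse E Y F0 -> extension (push F0) /\ ~ E (push F0).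
Proof.
  intros HF0 HnF0; split.
  - exists (fun x y => x = y), F0.
    split; [apply (cs_diag hE) |]; split; [exact HF0 |].
    intros x y [a [b [<- [<- Fab]]]]; right; exists a, b; auto.
  - intros Hpush; apply HnF0; exists (push F0); split; [exact Hpush |].
    intros a b; split; [intros Fab; exists a, b; auto |].
    intros [a' [b' [ea [eb Fab]]]].
    apply sig_Y_inj in ea; apply sig_Y_inj in eb; subst; exact Fab.
Qed.

Lemma bounded_of_extension (y0 : sig Y) :
  bounded extension (fun _ => True) -> bounded E' (fun _ => True).
Proof.
  intros [x0 [G [[H [K [HH [HK Hc]]]] HG]]].
  destruct (cs_conn hE (proj1_sig y0) x0) as [C [HC Cy0x0]].
  (* R moves from y0 (through x0) or from a point of Y by one H-step. *)
  set (R := restrict (fun u v => rcomp C H u v \/ H u v)).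
  assert (HR : E' R).
  { apply E'_ext, subcoarse_restrict, (cs_union hE); [apply (cs_comp hE) |];
      assumption. }
  exists y0, (fun a b => R a b \/ rcomp R (rcomp K R) a b); split.
  - apply (cs_union hE'); [| apply (cs_comp hE'); [| apply (cs_comp hE')]];
      assumption.
  - intros b _; destruct (Hc _ _ (HG (proj1_sig b) I)) as [p | [a [c [p [q r]]]]].
    + left; left; exists x0; auto.
    + right; exists a; split; [left; exists x0; auto |].
      exists c; split; [exact q | right; exact r].
Qed.

End Extension.

Lemma maximal_subballean :
  ~ bounded E Y -> maximal E -> maximal (subcoarse E Y).
Proof.
  intros hY [_ Hmax]; split; [apply unbounded_subballean, hY |].
  intros E' hE' E'_ext [F0 [HF0 HnF0]].
  destruct (classic (inhabited (sig Y))) as [[y0] | Hempty].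
  2: { exfalso; apply HnF0, subcoarse_empty; intros a; apply Hempty; exists; exact a. }
  destruct (extension_strict E' HF0 HnF0) as [Hpush HnE].
  apply (bounded_of_extension hE' E'_ext y0).
  apply Hmax; [apply (extension_coarse hE' E'_ext) | apply extension_contains, hE' |].
  exists (push F0); auto.
Qed.

Lemma extremely_normal_subballean :
  ~ bounded E Y -> extremely_normal E -> extremely_normal (subcoarse E Y).
Proof.
  intros hY [_ Hnormal]; split; [apply unbounded_subballean, hY |].
  intros A HA.
  destruct (classic (inhabited (sig Y))) as [[y0] | Hempty].
  - apply large_of_lift, Hnormal.
    intros Hb; apply HA, (bounded_of_lift y0 Hb).
  - exists (fun _ _ => True); split.
    + apply subcoarse_empty; intros a; apply Hempty; exists; exact a.
    + intros a; destruct Hempty; exists; exact a.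
Qed.

Lemma ultranormal_subballean :
  ~ bounded E Y -> ultranormal E -> ultranormal (subcoarse E Y).
Proof.
  intros hY [_ Hultra]; split; [apply unbounded_subballean, hY |].
  intros A B HA HB Hdis.
  (* Boundedness of the (diagonal) intersection provides a point of Y. *)
  destruct (Hdis _ (subcoarse_restrict (cs_diag hE))) as [y0 _].
  apply (Hultra (lift_set A) (lift_set B)).
  - intros Hb; apply HA, (bounded_of_lift y0 Hb).
  - intros Hb; apply HB, (bounded_of_lift y0 Hb).
  - apply asymp_disjoint_lift, Hdis.
Qed.

End Subballean.

Theorem proposition4 (X : Type) (E : rel X -> Prop) (Y : X -> Prop)
  (hE : is_coarse E) (hY : ~ bounded E Y) :
  (maximal E -> maximal (subcoarse E Y)) /\
  (extremely_normal E -> extremely_normal (subcoarse E Y)) /\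
  (ultranormal E -> ultranormal (subcoarse E Y)).
Proof.
  split; [| split].
  - exact (maximal_subballean hE hY).
  - exact (extremely_normal_subballean hE hY).
  - exact (ultranormal_subballean hE hY).
Qed.
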